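(* Let $U$ be a finite nonempty set, $R$ an equivalence relation on $U$, and $M(R)$ the support matroid induced by $R$. For every $X\subseteq U$, $X$ is a closed set of $M(R)$ if and only if $X$ is a union of some elements of $U/R$ (the set of equivalence classes of $R$).
   Context: For $x\in U$, $RN(x)=\{y\in U\mid xRy\}$; $R^{*}(X)=\{x\in U\mid RN(x)\cap X\neq\emptyset\}$. Let $\mathbf{S}(R)=\{X\subseteq U\mid R^{*}(X)=U\}$. The support matroid $M(R)=(U,\mathbf{I}(R))$ is the matroid on $U$ whose independent sets $\mathbf{I}(R)$ are the subsets of inclusion-minimal members of $\mathbf{S}(R)$. For a matroid $(U,\mathbf{I})$, the rank is $r(X)=\max\{|I|\mid I\subseteq X, I\in\mathbf{I}\}$, the closure is $cl(X)=\{e\in U\mid r(X)=r(X\cup\{e\})\}$, and $X$ is closed if $cl(X)=X$. *)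

(* The universe U is the full finite type T, i.e. [set: T]. *)
From mathcomp Require Import all_boot.
Set Implicit Arguments. Unset Strict Implicit. Unset Printing Implicit Defensive.

Section Support.
Variables (T : finType) (R : rel T).

Definition RN (x : T) : {set T} := [set y | R x y].

Definition Rstar (X : {set T}) : {set T} := [set x | RN x :&: X != set0].

Definition SR : {set {set T}} := [set X | Rstar X == [set: T]].

Definition indepR : {set {set T}} :=
  [set I : {set T} | [exists B : {set T}, minset (fun Y => Y \in SR) B && (I \subset B)]].

Definition rankR (X : {set T}) : nat :=
  \max_(I in indepR | I \subset X) #|I|.

Definition clR (X : {set T}) : {set T} :=
  [set e | rankR X == rankR (e |: X)].

Definition closedR (X : {set T}) : Prop := clR X = X.

Definition quotR : {set {set T}} := [set RN x | x in T].

End Support.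

(** For an equivalence relation [R], a set belongs to [S(R)] iff it meets every
    class, so its minimal members are the transversals of [U/R] and the
    independent sets are the sets meeting every class at most once.  Hence the
    rank of [X] is the number of classes met by [X], adding [e] to [X] keeps
    the rank iff the class of [e] already meets [X], and [cl(X)] is the union of
    the classes meeting [X]. *)
From mathcomp Require Import all_boot.
Set Implicit Arguments. Unset Strict Implicit. Unset Printing Implicit Defensive.

Section EquivalenceSupportMatroid.
Variables (T : finType) (R : rel T).
Hypotheses (Hrefl : reflexive R) (Hsym : symmetric R) (Htrans : transitive R).

Definition partial_transversal (I : {set T}) : Prop :=
  {in I &, forall x y, R x y -> x = y}.

Lemma RN_refl x : x \in RN R x.
Proof. by rewrite inE. Qed.

Lemma eq_RN x y : (RN R x == RN R y) = R x y.
Proof.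
apply/eqP/idP => [eq_xy | Rxy]; first by have := RN_refl y; rewrite -eq_xy inE.
apply/setP => z; rewrite !inE; apply/idP/idP; last exact: Htrans.
by apply: Htrans; rewrite Hsym.
Qed.

Lemma RstarP (X : {set T}) z :
  reflect (exists2 y, y \in X & R z y) (z \in Rstar R X).
Proof.
rewrite inE; apply: (iffP (set0Pn _)) => [[y] | [y Xy Rzy]].
  by rewrite !inE => /andP[Rzy Xy]; exists y.
by exists y; rewrite !inE Rzy.
Qed.

Lemma SRP (X : {set T}) :
  reflect (forall z, exists2 y, y \in X & R z y) (X \in SR R).
Proof.
rewrite inE -subTset; apply: (iffP subsetP) => [SX z | meetX z _].
  exact/RstarP/SX.
exact/RstarP/meetX.
Qed.

Lemma minset_SR_partial_transversal B :
  minset (fun Y => Y \in SR R) B -> partial_transversal B.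
Proof.
case/minsetP => /SRP meetB minB x y Bx By Rxy; have [//|neq_xy] := eqVneq x y.
have SR_By : B :\ y \in SR R.
  apply/SRP => z; have [w Bw Rzw] := meetB z.
  have [eq_wy | neq_wy] := eqVneq w y; last by exists w; rewrite // !inE neq_wy.
  exists x; first by rewrite !inE Bx andbT.
  by apply: Htrans Rzw _; rewrite eq_wy Hsym.
by have /setP/(_ y) := minB _ SR_By (subsetDl B [set y]); rewrite !inE eqxx By.
Qed.

Lemma SR_partial_transversal_minset C :
  C \in SR R -> partial_transversal C -> minset (fun Y => Y \in SR R) C.
Proof.
move=> SR_C trC; apply/minsetP; split=> // D /SRP meetD sDC.
apply/eqP; rewrite eqEsubset sDC; apply/subsetP => c Cc.
have [d Dd Rcd] := meetD c.
by rewrite (trC c d Cc (subsetP sDC d Dd) Rcd).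
Qed.

Definition repr_in (X : {set T}) (x : T) : T := odflt x [pick y in X :&: RN R x].

Lemma repr_inP (X : {set T}) x :
  x \in X -> (repr_in X x \in X) && R x (repr_in X x).
Proof.
rewrite /repr_in; case: pickP => [y | /(_ x)]; first by rewrite !inE.
by rewrite !inE Hrefl andbT => ->.
Qed.

Lemma repr_in_eq (X : {set T}) x y : x \in X -> R x y -> repr_in X x = repr_in X y.
Proof.
move=> Xx Rxy; rewrite /repr_in (eqP (etrans (eq_RN x y) Rxy)).
by case: pickP => // /(_ x); rewrite !inE Xx Hsym Rxy.
Qed.

Lemma partial_transversal_repr_in (X : {set T}) :
  partial_transversal (repr_in X @: X).
Proof.
move=> _ _ /imsetP[x Xx ->] /imsetP[y Xy ->] Rxy; apply: (repr_in_eq Xx).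
have /andP[_ Rx] := repr_inP Xx; have /andP[_ Ry] := repr_inP Xy.
by apply: Htrans Rx _; apply: Htrans Rxy _; rewrite Hsym.
Qed.

Lemma indepP (I : {set T}) : reflect (partial_transversal I) (I \in indepR R).
Proof.
apply: (iffP idP) => [|trI].
  rewrite inE => /existsP[B /andP[minB sIB]] x y Ix Iy.
  by apply: (minset_SR_partial_transversal minB); apply: (subsetP sIB).
pose D := ~: Rstar R I; pose C := I :|: repr_in D @: D.
have notRD x y : x \in I -> y \in repr_in D @: D -> ~~ R x y.
  move=> Ix /imsetP[z Dz ->]; have /andP[] := repr_inP Dz.
  rewrite !inE => /set0Pn nmeet _; apply/negP => Rx; apply: nmeet.
  by exists x; rewrite !inE Ix andbT Hsym.
have trC : partial_transversal C.
  move=> x y; rewrite !inE => /orP[Ix|Dx] /orP[Iy|Dy] Rxy.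
  - exact: trI.
  - by have := notRD x y Ix Dy; rewrite Rxy.
  - by have := notRD y x Iy Dx; rewrite Hsym Rxy.
  - exact: (partial_transversal_repr_in Dx Dy Rxy).
have SR_C : C \in SR R.
  apply/SRP => z; have [/RstarP[y Iy Rzy] | nIz] := boolP (z \in Rstar R I).
    by exists y; rewrite // inE Iy.
  have Dz : z \in D by rewrite inE.
  have /andP[_ Rz] := repr_inP Dz.
  by exists (repr_in D z); rewrite // inE imset_f ?orbT.
rewrite inE; apply/existsP; exists C.
by rewrite SR_partial_transversal_minset ?subsetUl.
Qed.

Lemma partial_transversal_RN_inj (I : {set T}) :
  partial_transversal I -> {in I &, injective (RN R)}.
Proof. by move=> trI x y Ix Iy /eqP; rewrite eq_RN; apply: trI. Qed.

Lemma rankR_classes (X : {set T}) : rankR R X = #|RN R @: X|.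
Proof.
apply/eqP; rewrite eqn_leq; apply/andP; split.
  apply/bigmax_leqP => I /andP[/indepP/partial_transversal_RN_inj injRN sIX].
  by rewrite -(card_in_imset injRN); apply/subset_leq_card/imsetS.
pose J := repr_in X @: X.
have RN_J : RN R @: J = RN R @: X.
  rewrite -imset_comp; apply: eq_in_imset => x Xx /=.
  by have /andP[_ Rx] := repr_inP Xx; apply/esym/eqP; rewrite eq_RN.
have sJX : J \subset X.
  by apply/subsetP => _ /imsetP[x Xx ->]; have /andP[] := repr_inP Xx.
have trJ : partial_transversal J by apply: partial_transversal_repr_in.
rewrite -RN_J (card_in_imset (partial_transversal_RN_inj trJ)).
apply: (leq_bigmax_cond (P := fun I => (I \in indepR R) && (I \subset X))).
by rewrite sJX andbT; apply/indepP.
Qed.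

Lemma clRP (X : {set T}) e :
  reflect (exists2 x, x \in X & R e x) (e \in clR R X).
Proof.
rewrite inE !rankR_classes imsetU1 cardsU1 -{1}[#|_|]add0n eqn_add2r eq_sym eqb0 negbK.
apply: (iffP imsetP) => [[x Xx /eqP]|[x Xx Rex]]; first by rewrite eq_RN; exists x.
by exists x => //; apply/eqP; rewrite eq_RN.
Qed.

Lemma clR_classes (X : {set T}) : clR R X = cover (RN R @: X).
Proof.
apply/setP => e; apply/clRP/bigcupP => [[x Xx Rex] | [_ /imsetP[x Xx ->]]].
  by exists (RN R x); rewrite ?imset_f // inE Hsym.
by rewrite inE Hsym => Rex; exists x.
Qed.

End EquivalenceSupportMatroid.

Theorem proposition8 (T : finType) (R : rel T)
    (HT : 0 < #|T|)
    (Hrefl : reflexive R) (Hsym : symmetric R) (Htrans : transitive R)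
    (X : {set T}) :
  closedR R X <-> exists P : {set {set T}}, P \subset quotR R /\ X = cover P.
Proof.
rewrite /closedR (clR_classes Hrefl Hsym Htrans); split => [clX | [P [sPq ->]]].
  exists (RN R @: X); split=> //.
  by apply/subsetP => _ /imsetP[x _ ->]; apply: imset_f.
apply/setP => e; apply/bigcupP/bigcupP.
  case=> _ /imsetP[x /bigcupP[B PB Bx] ->].
  have /imsetP[z _ defB] := subsetP sPq B PB.
  rewrite inE => Rxe; exists B; rewrite // defB inE.
  by move: Bx; rewrite defB inE => Rzx; apply: Htrans Rzx Rxe.
case=> B PB Be; exists (RN R e); rewrite ?imset_f ?inE //.
by apply/bigcupP; exists B.
Qed.
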